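(* In the algebra $\mathcal{B}_d$, for any nonnegative integers $a,b$ with $a+b=d+1$, $$f^a\binom{H_2}{b}=0=\binom{H_2}{b}e^a,\qquad e^a\binom{H_1}{b}=0=\binom{H_1}{b}f^a.$$ In particular $e^{d+1}=0=f^{d+1}$ in $\mathcal{B}_d$.
   Context: Fix an integer $d\ge 0$. $\mathcal{B}_d$ is the associative $\mathbb{Q}$-algebra with $1$ generated by $e,f,H_1,H_2$ subject to the relations $H_1H_2=H_2H_1$, $H_1e-eH_1=e$, $H_1f-fH_1=-f$, $H_2e-eH_2=-e$, $H_2f-fH_2=f$, $ef-fe=H_1-H_2$, $H_1+H_2=d$, and $H_1(H_1-1)\cdots(H_1-d)=0$. For an element $T$ and integer $m\ge 0$, $\binom{T}{m}=T(T-1)\cdots(T-m+1)/m!$. *)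

From mathcomp Require Import all_boot all_order all_algebra.
Set Implicit Arguments. Unset Strict Implicit. Unset Printing Implicit Defensive.
Import GRing.Theory.
Local Open Scope ring_scope.

Definition binom (A : algType rat) (T : A) (m : nat) : A :=
  ((m`!)%:R : rat)^-1 *: \prod_(i < m) (T - i%:R).

Definition B_rels (d : nat) (A : algType rat) (e f H1 H2 : A) : Prop :=
  H1 * H2 = H2 * H1 /\
  H1 * e - e * H1 = e /\
  H1 * f - f * H1 = - f /\
  H2 * e - e * H2 = - e /\
  H2 * f - f * H2 = f /\
  e * f - f * e = H1 - H2 /\
  H1 + H2 = d%:R /\
  \prod_(i < d.+1) (H1 - i%:R) = 0.

From mathcomp Require Import all_boot all_order all_algebra.
Set Implicit Arguments. Unset Strict Implicit. Unset Printing Implicit Defensive.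
Import GRing.Theory Num.Theory.
Local Open Scope ring_scope.

(* Write (H)_n for the falling factorial H (H - 1) ... (H - n + 1).  If
   H x - x H = x then H x^a = x^a (H + a): x raises H-eigenvalues by one.
   By induction on a, x^a (H)_(n - a) = 0 whenever (H)_n = 0.  Indeed, for
   w = x^a (H)_(n - a - 1) the induction hypothesis says w H = (n - a - 1) w,
   so H (x w) = n (x w), whence 0 = (H)_n (x w) = n! (x w) and x w = 0.
   The mirrored statements (H)_(n - a) x^a = 0 are the same result in the
   opposite ring, and (H2)_(d+1) = +-(H1)_(d+1) = 0 because H2 = d - H1. *)

Definition falling (R : pzRingType) (x : R) (n : nat) : R :=
  \prod_(i < n) (x - i%:R).

Section Falling.
Variable R : pzRingType.
Implicit Types (x : R) (n : nat).

Lemma fallingS x n : falling x n.+1 = falling x n * (x - n%:R).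
Proof. exact: big_ord_recr. Qed.

Lemma commr_falling x n : GRing.comm x (falling x n).
Proof. by apply: commr_prod => i _; apply/commrB/commr_nat/commr_refl. Qed.

Lemma falling_eigen (h z : R) r n : h * z = z *+ r -> (n <= r)%N ->
  falling h n * z = z *+ r ^_ n.
Proof.
move=> hz; elim: n => [|n IHn] ltnr; first by rewrite /falling big_ord0 mul1r.
rewrite fallingS -mulrA mulrBl hz mulr_natl -mulrnBr 1?ltnW //.
by rewrite mulrnAr IHn 1?ltnW // -mulrnA -ffactnSr.
Qed.

Lemma eigen_falling_eq0 (h z : R) n :
  falling h n = 0 -> (forall y : R, y *+ n`! = 0 -> y = 0) ->
  h * z = z *+ n -> z = 0.
Proof.
move=> hn0 torsion hz; apply: torsion.
by rewrite -ffactnn -(falling_eigen hz) // hn0 mul0r.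
Qed.

End Falling.

Lemma falling_converse (R : pzRingType) (x : R) n :
  @falling R^c x n = falling x n.
Proof.
elim: n => [|n IHn]; first by rewrite /falling !big_ord0.
rewrite (@fallingS R^c) fallingS IHn.
change ((x - n%:R) * falling x n = falling x n * (x - n%:R)).
exact: commr_sym (commrB (commr_sym (commr_falling x n)) (commr_nat _ _)).
Qed.

Section Ladder.
Variables (R : pzRingType) (h x : R) (n : nat).
Hypotheses (hx : h * x - x * h = x) (hn0 : falling h n = 0)
  (torsion : forall y : R, y *+ n`! = 0 -> y = 0).

Lemma mulr_expr_shift a : h * x ^+ a = x ^+ a * (h + a%:R).
Proof.
have hxE : h * x = x * (h + 1) by rewrite mulrDr mulr1 -[X in _ + X]hx addrC subrK.
elim: a => [|a IHa]; first by rewrite expr0 mulr1 mul1r addr0.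
rewrite exprSr mulrA IHa -!mulrA mulrDl hxE -(commr_nat x a) -mulrDr.
by rewrite -addrA -natr1 (addrC 1).
Qed.

Lemma expr_falling_eq0 a : (a <= n)%N -> x ^+ a * falling h (n - a) = 0.
Proof.
elim: a => [|a IHa] ltan; first by rewrite subn0 mul1r.
set m := (n - a.+1)%N; have nE : (n - a = m.+1)%N by rewrite /m subnSK.
pose g := falling h m; pose w := x ^+ a * g.
have wh : w * h = w *+ m.
  apply/eqP; rewrite -subr_eq0 -mulr_natr -mulrBr /w -mulrA -fallingS -nE.
  by rewrite IHa 1?ltnW.
have gh : GRing.comm g (h + a.+1%:R).
  by apply: commrD; [exact/commr_sym/commr_falling | exact: commr_nat].
apply: (eigen_falling_eq0 hn0 torsion).
rewrite mulrA mulr_expr_shift -mulrA -gh exprS -!mulrA (mulrA (x ^+ a)) -/w.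
rewrite mulrDr wh mulr_natr -mulrnDr mulrnAr mulrA -exprS /m subnK //.
Qed.

End Ladder.

Lemma falling_expr_eq0 (R : pzRingType) (h x : R) n a :
  x * h - h * x = x -> falling h n = 0 ->
  (forall y : R, y *+ n`! = 0 -> y = 0) -> (a <= n)%N ->
  falling h (n - a) * x ^+ a = 0.
Proof.
move=> xh hn0 torsion lean.
have := @expr_falling_eq0 R^c h x n xh _ torsion a lean.
by rewrite !falling_converse revrX; apply.
Qed.

Lemma rmorph_falling (R S : pzRingType) (f : {rmorphism R -> S}) (x : R) n :
  f (falling x n) = falling (f x) n.
Proof.
by rewrite rmorph_prod; apply: eq_bigr => i _; rewrite rmorphB rmorph_nat.
Qed.

Lemma falling_reflect (R : comPzRingType) (x : R) n :
  falling (n%:R - x) n.+1 = (-1) ^+ n.+1 * falling x n.+1.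
Proof.
transitivity (\prod_(i < n.+1) - (x - i%:R)); last by rewrite prodrN card_ord.
rewrite /falling (reindex_inj rev_ord_inj); apply: eq_bigr => i _ /=.
by rewrite subSS (natrB _ (leq_ord i)) addrAC subKr opprB.
Qed.

Lemma falling_subr (R : comNzRingType) (A : algType R) (a : A) n :
  falling (n%:R - a) n.+1 = (-1) ^+ n.+1 * falling a n.+1.
Proof.
have := congr1 (horner_alg a) (falling_reflect ('X : {poly R}) n).
by rewrite rmorphM !rmorph_falling rmorphB rmorph_sign rmorph_nat /= horner_algX.
Qed.

Lemma lmod_mulrn_eq0 (F : numFieldType) (V : lmodType F) (v : V) n :
  (v *+ n == 0) = (n == 0%N) || (v == 0).
Proof. by rewrite -scaler_nat scaler_eq0 pnatr_eq0. Qed.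

Lemma binomE (A : algType rat) (x : A) m :
  binom x m = (m`!%:R)^-1 *: falling x m.
Proof. by []. Qed.

Lemma binom0 (A : algType rat) (x : A) : binom x 0 = 1.
Proof. by rewrite binomE /falling big_ord0 fact0 invr1 scale1r. Qed.

Theorem lemma4p3 (d : nat) (A : algType rat) (e f H1 H2 : A) :
  B_rels d e f H1 H2 ->
  (forall a b : nat, (a + b = d.+1)%N ->
     [/\ f ^+ a * binom H2 b = 0, binom H2 b * e ^+ a = 0,
         e ^+ a * binom H1 b = 0 & binom H1 b * f ^+ a = 0])
  /\ (e ^+ d.+1 = 0 /\ f ^+ d.+1 = 0).
Proof.
move=> [_ [H1e [H1f [H2e [H2f [_ [H12 falling_H1]]]]]]].
have falling_H2 : falling H2 d.+1 = 0.
  have -> : H2 = d%:R - H1 by rewrite -H12 addrAC subrr add0r.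
  by rewrite falling_subr /falling falling_H1 mulr0.
have torsion (y : A) : y *+ (d.+1)`! = 0 -> y = 0.
  by move/eqP; rewrite lmod_mulrn_eq0 gtn_eqF ?fact_gt0 // => /eqP.
have eH2 : e * H2 - H2 * e = e by rewrite -opprB H2e opprK.
have fH1 : f * H1 - H1 * f = f by rewrite -opprB H1f opprK.
have vanish a b : (a + b = d.+1)%N ->
    [/\ f ^+ a * binom H2 b = 0, binom H2 b * e ^+ a = 0,
        e ^+ a * binom H1 b = 0 & binom H1 b * f ^+ a = 0].
  move=> abE; have lea : (a <= d.+1)%N by rewrite -abE leq_addr.
  have -> : b = (d.+1 - a)%N by rewrite -abE addKn.
  split; rewrite binomE.
  - by rewrite -scalerAr (expr_falling_eq0 H2f falling_H2 torsion lea) scaler0.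
  - by rewrite -scalerAl (falling_expr_eq0 eH2 falling_H2 torsion lea) scaler0.
  - by rewrite -scalerAr (expr_falling_eq0 H1e falling_H1 torsion lea) scaler0.
  - by rewrite -scalerAl (falling_expr_eq0 fH1 falling_H1 torsion lea) scaler0.
have [f0 _ e0 _] := vanish d.+1 0%N (addn0 _).
by rewrite !binom0 !mulr1 in f0 e0.
Qed.
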